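(* For every $n\ge 2$, the transition monoid of the automaton $\mathcal{V}_n$ is the full transformation monoid $T_n$ of its state set, and the reset threshold of $\mathcal{V}_n$ equals $\frac{n(n-1)}{2}$.
   Context: For a DFA $\langle Q,\Sigma,\delta\rangle$, the transition monoid is the monoid of transformations of $Q$ generated by the actions of the letters; $T_n$ denotes the monoid of all maps from an $n$-element set to itself. The reset threshold is the minimum length of a word $w$ with $|Q\cdot w|=1$ (words act letter by letter from left to right). The automaton $\mathcal{V}_n$ has states $q_0,\dots,q_{n-1}$ and letters $a_1,\dots,a_n$: for $1\le i\le n-1$, the letter $a_i$ swaps $q_{i-1}$ and $q_i$ and fixes all other states; the letter $a_n$ maps both $q_0$ and $q_1$ to $q_0$ and fixes $q_2,\dots,q_{n-1}$. *)

From mathcomp Require Import all_boot.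
Set Implicit Arguments. Unset Strict Implicit. Unset Printing Implicit Defensive.

Section DFA.
Variables (Q Sigma : finType) (delta : Q -> Sigma -> Q).

Definition act (w : seq Sigma) (q : Q) : Q := foldl delta q w.

Definition in_transition_monoid (f : Q -> Q) : Prop :=
  exists w : seq Sigma, forall q, act w q = f q.

Definition transition_monoid_is_full : Prop :=
  forall f : {ffun Q -> Q}, in_transition_monoid f.

Definition is_reset_word (w : seq Sigma) : bool :=
  #|[set act w q | q : Q]| == 1.

Definition reset_threshold_eq (k : nat) : Prop :=
  (exists w, is_reset_word w /\ size w = k) /\
  (forall w, is_reset_word w -> k <= size w).
End DFA.

(* The automaton V_n. States q_0..q_{n-1} are 'I_n; letter a_{i+1} is the
   ordinal i : 'I_n (so a_1..a_{n-1} are 0..n-2 and a_n is n-1).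
   V_nat gives the value (as a nat) of the image state. *)
Definition V_nat (n q a : nat) : nat :=
  if a.+1 < n then
    (if q == a then a.+1 else if q == a.+1 then a else q)
  else (if q == 1 then 0 else q).

(* The result of V_nat is always < n; insubd just packages it as an ordinal. *)
Definition V_delta (n : nat) (q a : 'I_n) : 'I_n := insubd q (V_nat n q a).

From mathcomp Require Import all_boot perm zify.
Set Implicit Arguments. Unset Strict Implicit. Unset Printing Implicit Defensive.

(* The letters a_1, ..., a_(n-1) act as the adjacent transpositions, which
   generate the symmetric group, and a_n is the idempotent sending q_1 to q_0.
   Conjugating it by adjacent transpositions gives every idempotent [q_a |-> q_b]
   (a <> b), and transpositions and these idempotents generate T_n: peel off
   one moved point at a time.

   For the reset threshold, give the state q_i the weight i and let the
   potential of a set of states be its total weight minus its least weight.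
   A transposition a_i lowers the weight of one state by 1, and a_n either
   lowers the weight of q_1 by 1 or merges q_1 into q_0; either way the
   potential of the image drops by at most 1 per letter.  It starts at
   0 + 1 + ... + (n-1) = n(n-1)/2 on the whole state set and is 0 on a
   singleton, whence the lower bound.  The word that moves q_(k+1) down to q_1
   with a_(k+1), ..., a_2 and then merges it into q_0 with a_n, for
   k = 0, ..., n-2, resets V_n and has exactly that length. *)

Section Automaton.
Variables (Q Sigma : finType) (delta : Q -> Sigma -> Q).

Lemma act_cat u v q : act delta (u ++ v) q = act delta v (act delta u q).
Proof. exact: foldl_cat. Qed.

Lemma act_rcons w a q : act delta (rcons w a) q = delta (act delta w q) a.
Proof. exact: foldl_rcons. Qed.

Lemma transition_monoid_id : in_transition_monoid delta id.
Proof. by exists [::]. Qed.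

Lemma transition_monoid_letter a : in_transition_monoid delta (delta^~ a).
Proof. by exists [:: a]. Qed.

Lemma transition_monoid_comp f g :
  in_transition_monoid delta f -> in_transition_monoid delta g ->
  in_transition_monoid delta (g \o f).
Proof. by move=> [u fu] [v gv]; exists (u ++ v) => q; rewrite act_cat fu gv. Qed.

Lemma transition_monoid_eq f g :
  f =1 g -> in_transition_monoid delta f -> in_transition_monoid delta g.
Proof. by move=> fg [w fw]; exists w => q; rewrite fw fg. Qed.

Lemma reset_word_size_ge (pot : {set Q} -> nat) w :
  (forall S a, pot S <= pot [set delta q a | q in S] + 1) ->
  (forall q, pot [set q] = 0) ->
  is_reset_word delta w -> pot [set: Q] <= size w.
Proof.
move=> step pot1 /cards1P[q0 Qw].
suff : pot [set: Q] <= pot [set act delta w q | q : Q] + size w.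
  by rewrite Qw pot1.
elim/last_ind: w {Qw} => [|w a IH].
  rewrite addn0; apply/eq_leq/congr1/setP => q.
  by rewrite inE; apply/esym/imsetP; exists q.
apply: leq_trans IH _; rewrite size_rcons addnS -addSn leq_add2r -addn1.
have -> : [set act delta (rcons w a) q | q : Q] =
          [set delta q a | q in [set act delta w q | q : Q]].
  by rewrite -imset_comp; apply: eq_imset => q; rewrite act_rcons.
exact: step.
Qed.

End Automaton.

Section TransformationGenerators.
Variable T : finType.

Definition merge (a b z : T) : T := if z == a then b else z.

Lemma inj_merge (s : T -> T) a b z :
  injective s -> s (merge a b z) = merge (s a) (s b) (s z).
Proof. by move=> s_inj; rewrite /merge (inj_eq s_inj); case: eqP. Qed.

Variable P : (T -> T) -> Prop.
Hypotheses (P_eq : forall f g, f =1 g -> P f -> P g) (P_id : P id)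
  (P_comp : forall f g, P f -> P g -> P (g \o f))
  (P_tperm : forall a b, a != b -> P (tperm a b))
  (P_merge : forall a b, a != b -> P (merge a b)).

Lemma generated_all f : P f.
Proof.
have [k] := ubnP #|[set x | f x != x]|; elim: k f => // k IH f lt_fk.
have [f_id|[x]] := set_0Vmem [set x | f x != x].
  apply: P_eq P_id => q; apply/esym/eqP.
  by have := in_set0 q; rewrite -f_id inE => /negbFE.
rewrite inE => fx_x; have x_fx : x != f x by rewrite eq_sym.
have shrink g : g x = x -> (forall z, g z != z -> f z != z) -> P g.
  move=> gx moved_g; apply: IH; rewrite -ltnS (leq_trans _ lt_fk) // ltnS.
  apply/proper_card/properP; split; first by apply/subsetP => z; rewrite !inE => /moved_g.
  by exists x; rewrite !inE ?gx ?eqxx.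
have [ffx|ffx_fx] := eqVneq (f (f x)) (f x).
  pose g z := if z == x then x else f z.
  have Pg : P g.
    by apply: shrink => [|z]; rewrite /g ?eqxx //; case: (z =P x) => [->|]; rewrite ?eqxx.
  apply: P_eq (P_comp (P_merge x_fx) Pg) => z /=; rewrite /g /merge.
  by case: (z =P x) => [->|/eqP/negPf ->]; rewrite ?(negPf fx_x).
pose g := tperm x (f x) \o f.
have Pg : P g.
  apply: shrink => [|z]; rewrite /g /=; first by rewrite tpermR.
  apply: contraNN => /eqP fz; rewrite fz tpermD //.
    by apply: contraNneq fx_x => ->; rewrite fz.
  by apply: contraNneq ffx_fx => ->; rewrite fz.
by apply: P_eq (P_comp Pg (P_tperm x_fx)) => z /=; rewrite tpermK.
Qed.

End TransformationGenerators.

Section AdjacentTranspositions.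
Variable n : nat.

Definition adj_tperm i : {perm 'I_n.+1} := tperm (inord i) (inord i.+1).

Lemma adj_tpermE i (z : 'I_n.+1) : i < n ->
  adj_tperm i z = (if z == i :> nat then i.+1 else if z == i.+1 :> nat then i else z) :> nat.
Proof.
move=> lt_in; rewrite permE /= -!(inj_eq val_inj) /= !inordK //; try lia.
by case: eqP => _; [|case: eqP => _]; rewrite ?inordK //; lia.
Qed.

Lemma adj_tperm_decrease (a b : 'I_n.+1) : a != b -> 1 < a + b ->
  exists2 i, i < n & adj_tperm i a + adj_tperm i b < a + b.
Proof.
rewrite -(inj_eq (@ord_inj _)) => /eqP a_b ab_gt1.
have a_lt := ltn_ord a; have b_lt := ltn_ord b.
have [far|near] := ltnP (minn a b).+1 (maxn a b).
  exists (maxn a b).-1; rewrite ?adj_tpermE; try lia.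
  by repeat case: eqP => ?; lia.
exists (minn a b).-1; rewrite ?adj_tpermE; try lia.
by repeat case: eqP => ?; lia.
Qed.

Lemma adj_tperm_transitive (R : 'I_n.+1 -> 'I_n.+1 -> Prop) :
  0 < n -> R (inord 1) (inord 0) ->
  (forall i a b, i < n -> R (adj_tperm i a) (adj_tperm i b) -> R a b) ->
  forall a b, a != b -> R a b.
Proof.
move=> n_gt0 R10 R_adj a b; have [k] := ubnP (a + b).
elim: k a b => // k IH a b lt_ab_k a_b.
have [ab_le1|ab_gt1] := leqP (a + b) 1; last first.
  have [i lt_in dec_i] := adj_tperm_decrease a_b ab_gt1.
  by apply: (R_adj i _ _ lt_in); apply: IH; rewrite ?(inj_eq perm_inj) //; lia.
have [[-> ->]|[-> ->]] // : (a = inord 0 /\ b = inord 1) \/ (a = inord 1 /\ b = inord 0).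
  case: a b a_b ab_le1 {lt_ab_k} => [[|[|?]] ?] [[|[|?]] ?] //= _ _;
    [left|right]; split; apply: val_inj; rewrite /= inordK //.
by apply: (R_adj 0 _ _ n_gt0); rewrite /adj_tperm tpermL tpermR.
Qed.

End AdjacentTranspositions.

Section Potential.
Variables (T : finType) (wt : T -> nat).
Implicit Types (S : {set T}) (x y : T).

Definition weight_off S x := \sum_(y in S | y != x) wt y.
Definition potential S := \max_(x in S) weight_off S x.

Lemma weight_off_split S x : x \in S -> \sum_(y in S) wt y = wt x + weight_off S x.
Proof. by move=> xS; rewrite (bigD1 x). Qed.

Lemma weight_off_max S x : x \in S -> weight_off S x <= potential S.
Proof. exact: (leq_bigmax_cond (F := weight_off S)). Qed.

Lemma potential_set1 x : potential [set x] = 0.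
Proof.
apply/eqP; rewrite -leqn0; apply/bigmax_leqP => y /set1P ->.
by rewrite /weight_off big1 // => z /andP[/set1P -> /eqP].
Qed.

Lemma potential_imset (g : T -> T) c S : {in S &, injective g} ->
  (forall y, wt y <= wt (g y) + (y == c)) -> potential S <= potential (g @: S) + 1.
Proof.
move=> g_inj wt_g; apply/bigmax_leqP => x xS.
have gxS : g x \in g @: S by apply: imset_f.
have wt_gS : weight_off (g @: S) (g x) = \sum_(y in S | y != x) wt (g y).
  apply/eqP; rewrite -(eqn_add2l (wt (g x))) -weight_off_split //.
  by rewrite big_imset //= (bigD1 x).
apply: leq_trans _ (leq_add (weight_off_max gxS) (leqnn 1)).
rewrite wt_gS (leq_trans (leq_sum _ (fun y _ => wt_g y))) // big_split leq_add2l /=.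
apply: leq_trans (_ : \sum_y (y == c : nat) <= 1).
  by rewrite [X in _ <= X](bigID [pred y | (y \in S) && (y != x)]) /= leq_addr.
by rewrite (bigD1 c) //= eqxx big1 // => y /negPf ->.
Qed.

Lemma potential_setD1 c d S : c \in S -> d \in S -> c != d -> wt c <= wt d ->
  potential S <= potential (S :\ d) + wt d.
Proof.
move=> cS dS c_d wt_cd; have cSd : c \in S :\ d by rewrite !inE c_d.
apply/bigmax_leqP => x xS; rewrite addnC.
have [->|x_d] := eqVneq x d.
  have -> : weight_off S d = wt c + weight_off (S :\ d) c.
    by rewrite -weight_off_split //; apply: eq_bigl => y; rewrite !inE andbC.
  exact: leq_add wt_cd (weight_off_max cSd).
have xSd : x \in S :\ d by rewrite !inE x_d.
have -> : weight_off S x = wt d + weight_off (S :\ d) x.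
  rewrite /weight_off (bigD1 d) /=; last by rewrite dS eq_sym.
  by congr (_ + _); apply: eq_bigl => y; rewrite !inE -!andbA; do !bool_congr.
by rewrite leq_add2l weight_off_max.
Qed.

End Potential.

Lemma V_deltaE n (q a : 'I_n) : V_delta q a = V_nat n q a :> nat.
Proof.
rewrite /V_delta val_insubd /V_nat; case: ifP => // /negP[].
have := ltn_ord q; have := ltn_ord a.
by case: ifP => ?; repeat case: eqP => ?; lia.
Qed.

Section Vn.
Variable m : nat.
Local Notation n := m.+2.
Local Notation V := (@V_delta n).
Local Notation in_monoid := (in_transition_monoid V).

Lemma V_delta_adj i q : i < m.+1 -> V q (inord i) = adj_tperm m.+1 i q.
Proof.
move=> lt_im; apply: ord_inj; rewrite V_deltaE adj_tpermE // /V_nat inordK; last lia.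
by rewrite ltnS lt_im.
Qed.

Lemma V_delta_last q : V q ord_max = merge (inord 1) (inord 0) q.
Proof.
apply: ord_inj; rewrite V_deltaE /V_nat ltnn /merge -(inj_eq val_inj) /= !inordK //.
by case: eqP => //; rewrite inordK.
Qed.

Lemma in_monoid_conj (F : 'I_n -> 'I_n -> 'I_n -> 'I_n) :
  (forall s, injective s -> forall a b z, s (F a b z) = F (s a) (s b) (s z)) ->
  forall i a b, i < m.+1 ->
  in_monoid (F (adj_tperm m.+1 i a) (adj_tperm m.+1 i b)) -> in_monoid (F a b).
Proof.
move=> F_equiv i a b lt_im F_sa_sb; set s := adj_tperm m.+1 i.
have s_V : in_monoid s.
  apply: transition_monoid_eq (transition_monoid_letter _ (inord i)) => q.
  by rewrite /= V_delta_adj.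
apply: transition_monoid_eq
  (transition_monoid_comp (transition_monoid_comp s_V F_sa_sb) s_V) => z /=.
by rewrite F_equiv ?tpermK //; exact: perm_inj.
Qed.

Lemma in_monoid_tperm a b : a != b -> in_monoid (tperm a b).
Proof.
move: a b; apply: (adj_tperm_transitive (R := fun a b => in_monoid (tperm a b))).
- by [].
- apply: transition_monoid_eq (transition_monoid_letter _ (inord 0)) => q.
  by rewrite /= V_delta_adj // tpermC.
- apply: (in_monoid_conj (F := fun a b z => tperm a b z)) => s s_inj *.
  exact: inj_tperm.
Qed.

Lemma in_monoid_merge a b : a != b -> in_monoid (merge a b).
Proof.
move: a b; apply: (adj_tperm_transitive (R := fun a b => in_monoid (merge a b))).
- by [].
- apply: transition_monoid_eq (transition_monoid_letter _ ord_max) => q.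
  by rewrite /= V_delta_last.
- apply: (in_monoid_conj (F := @merge _)) => s s_inj *.
  exact: inj_merge.
Qed.

Lemma V_transition_monoid_full : transition_monoid_is_full V.
Proof.
move=> f; apply: (generated_all (P := in_monoid)).
- exact: transition_monoid_eq.
- exact: transition_monoid_id.
- exact: transition_monoid_comp.
- exact: in_monoid_tperm.
- exact: in_monoid_merge.
Qed.

Fixpoint shift_down k : seq 'I_n :=
  if k is k'.+1 then inord k :: shift_down k' else [::].

Lemma act_shift_down k (q : 'I_n) : k <= m ->
  act V (shift_down k) q =
  (if q == k.+1 :> nat then 1 else if 0 < q <= k then q.+1 else q) :> nat.
Proof.
elim: k q => [|k IH] q le_km /=; first by repeat case: ifP => /eqP ?; lia.
rewrite -/(act V _ _) IH; last lia.
rewrite V_delta_adj ?adj_tpermE; try lia.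
move: (nat_of_ord q) => x.
have [->|x1] := eqVneq x k.+1; first by repeat case: ifP; lia.
have [_|x2] := eqVneq x k.+2; first by rewrite eqxx.
by repeat case: ifP; lia.
Qed.

Lemma act_shift_down_merge k (q : 'I_n) : k <= m ->
  act V (rcons (shift_down k) ord_max) q =
  (if q == k.+1 :> nat then 0 else if 0 < q <= k then q.+1 else q) :> nat.
Proof.
move=> le_km; rewrite act_rcons V_deltaE /V_nat ltnn act_shift_down //.
case: (nat_of_ord q =P k.+1) => [//|?].
by case: (boolP (0 < q <= k)) => ?; case: ifP; lia.
Qed.

Fixpoint sync_word k : seq 'I_n :=
  if k is k'.+1 then sync_word k' ++ rcons (shift_down k') ord_max else [::].

Lemma act_sync_word k (q : 'I_n) : k <= m.+1 ->
  act V (sync_word k) q = (if q <= k then 0 else q) :> nat.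
Proof.
elim: k q => [|k IH] q le_km /=; first by case: ifP; lia.
rewrite act_cat act_shift_down_merge ?IH; try lia.
by case: (leqP q k) => ? /=; repeat case: ifP; lia.
Qed.

Lemma size_sync_word k : size (sync_word k) = 'C(k.+1, 2).
Proof.
have size_shift j : size (shift_down j) = j by elim: j => //= j ->.
elim: k => // k IH.
by rewrite [sync_word _]/= size_cat size_rcons size_shift IH [RHS]binS bin1.
Qed.

Lemma sync_word_reset : is_reset_word V (sync_word m.+1).
Proof.
apply/cards1P; exists ord0; apply/setP => z; rewrite !inE.
apply/imsetP/eqP => [[q _ ->]|->].
  by apply: ord_inj; rewrite act_sync_word //= ifT // -ltnS.
by exists ord0 => //; apply: ord_inj; rewrite act_sync_word.
Qed.

Local Notation pot := (potential (@nat_of_ord n)).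

Lemma potential_V_adj S i : i < m.+1 ->
  pot S <= pot [set V q (inord i) | q in S] + 1.
Proof.
move=> lt_im; under eq_imset do rewrite V_delta_adj //.
apply: (potential_imset (c := inord i.+1)) => [y1 y2 _ _|y]; first exact: perm_inj.
by rewrite adj_tpermE // -(inj_eq (@ord_inj _)) inordK //; repeat case: eqP; lia.
Qed.

Lemma potential_V_last S : pot S <= pot [set V q ord_max | q in S] + 1.
Proof.
under eq_imset do rewrite V_delta_last.
have n01 : inord 0 != inord 1 :> 'I_n by rewrite -(inj_eq (@ord_inj _)) !inordK.
have [/andP[S0 S1]|S01] := boolP ((inord 0 \in S) && (inord 1 \in S)).
  have -> : [set merge (inord 1) (inord 0) q | q in S] = S :\ inord 1.
    apply/setP => z; rewrite !inE /merge; apply/imsetP/andP => [[y yS ->]|[z1 zS]].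
      by case: (y =P inord 1) => [_|/eqP] /=; split.
    by exists z; rewrite ?(negPf z1).
  by have := potential_setD1 (wt := @nat_of_ord n) S0 S1 n01; rewrite !inordK //; apply.
apply: (potential_imset (c := inord 1)) => [y1 y2 y1S y2S|y]; rewrite /merge.
  case: (y1 =P inord 1) => [y1_1|_]; case: (y2 =P inord 1) => [y2_1|_] e.
  - by rewrite y1_1 y2_1.
  - by move: S01; rewrite e -y1_1 y1S y2S.
  - by move: S01; rewrite -e -y2_1 y1S y2S.
  - exact: e.
by case: (y =P inord 1) => [->|_]; rewrite ?inordK ?leq_addr.
Qed.

Lemma potential_V_step S a : pot S <= pot [set V q a | q in S] + 1.
Proof.
have [lt_am|] := ltnP a m.+1; first by rewrite -[a]inord_val potential_V_adj.
rewrite leq_eqVlt ltnNge -ltnS ltn_ord orbF => /eqP a_max.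
have -> : a = ord_max by apply: ord_inj.
exact: potential_V_last.
Qed.

Lemma bin2_le_potential_setT : 'C(n, 2) <= pot [set: 'I_n].
Proof.
apply: leq_trans _ (weight_off_max (@nat_of_ord n) (in_setT ord0)).
have := weight_off_split (@nat_of_ord n) (in_setT ord0); rewrite add0n => <-.
by rewrite -bin2_sum big_mkord; apply/eq_leq/eq_bigl => i; rewrite inE.
Qed.

Lemma V_reset_threshold : reset_threshold_eq V 'C(n, 2).
Proof.
split.
  by exists (sync_word m.+1); rewrite size_sync_word; split; first exact: sync_word_reset.
move=> w /(reset_word_size_ge potential_V_step (fun q => potential_set1 _ q)).
exact: leq_trans bin2_le_potential_setT.
Qed.

End Vn.

Theorem theorem3 (n : nat) (hn : 2 <= n) :
  transition_monoid_is_full (@V_delta n) /\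
  reset_threshold_eq (@V_delta n) (n * (n - 1) %/ 2).
Proof.
case: n hn => [|[|m]] // _.
rewrite subn1 divn2 -bin2.
by split; [exact: V_transition_monoid_full | exact: V_reset_threshold].
Qed.
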